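(* Let $\mathcal{A}^{(+)}$ be the unital associative $\mathbb{C}$-algebra generated by $\nabla_0,\nabla_1,\nabla_2,\nabla_3$ with relations $[\nabla_0,\nabla_k]=[\nabla_\ell,\nabla_m]$ for every cyclic permutation $(k,\ell,m)$ of $(1,2,3)$. Let $L=L(\nabla_1,\nabla_2,\nabla_3)$ be the free Lie algebra on $\nabla_1,\nabla_2,\nabla_3$ (graded with generators in degree $1$), and let $\delta$ be the degree-one derivation of $L$ determined by $\delta(\nabla_k)=[\nabla_\ell,\nabla_m]$ for every cyclic permutation $(k,\ell,m)$ of $(1,2,3)$. Then $\mathcal{A}^{(+)}$ is isomorphic to the universal enveloping algebra of the semi-direct product graded Lie algebra $\mathbb{C}\delta\ltimes L$ (with $\delta$ of degree $1$ and $\nabla_0$ corresponding to $\delta$). *)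

From HB Require Import structures.
From mathcomp Require Import all_boot all_algebra.
From mathcomp Require Import complex.
From mathcomp Require Import Rstruct.
Set Implicit Arguments. Unset Strict Implicit. Unset Printing Implicit Defensive.
Import GRing.Theory.
Local Open Scope ring_scope.

Definition C : fieldType := (Rdefinitions.R)[i].

Section Defs.
Variable F : fieldType.

Definition is_lie (V : lmodType F) (br : V -> V -> V) : Prop :=
  [/\ (forall (a : F) (x y z : V), br (a *: x + y) z = a *: br x z + br y z),
      (forall (a : F) (x y z : V), br z (a *: x + y) = a *: br z x + br z y),
      (forall x : V, br x x = 0) &
      (forall x y z : V, br x (br y z) + br y (br z x) + br z (br x y) = 0)].

Definition is_linear (U V : lmodType F) (f : U -> V) : Prop :=
  forall (a : F) (x y : U), f (a *: x + y) = a *: f x + f y.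

Definition is_lie_hom (U V : lmodType F) (brU : U -> U -> U) (brV : V -> V -> V)
  (f : U -> V) : Prop :=
  is_linear f /\ forall x y : U, f (brU x y) = brV (f x) (f y).

Definition is_free_lie3 (L : lmodType F) (br : L -> L -> L) (g : 'I_3 -> L) : Prop :=
  is_lie br /\
  forall (M : lmodType F) (brM : M -> M -> M), is_lie brM ->
  forall h : 'I_3 -> M,
    (exists f : L -> M, is_lie_hom br brM f /\ forall k, f (g k) = h k) /\
    (forall f1 f2 : L -> M, is_lie_hom br brM f1 -> is_lie_hom br brM f2 ->
       (forall k, f1 (g k) = h k) -> (forall k, f2 (g k) = h k) ->
       forall x, f1 x = f2 x).

Definition is_derivation (L : lmodType F) (br : L -> L -> L) (D : L -> L) : Prop :=
  is_linear D /\ forall x y : L, D (br x y) = br (D x) y + br x (D y).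

(* Semi-direct product F d |x L for a derivation D of L: carrier F * L,
   (a, x) standing for a d + x, with bracket
   [a d + x, b d + y] = a D(y) - b D(x) + [x, y]. *)
Definition sdprod_br (L : lmodType F) (br : L -> L -> L) (D : L -> L)
  (u v : (F^o * L)%type) : (F^o * L)%type :=
  (0, u.1 *: D v.2 - v.1 *: D u.2 + br u.2 v.2).

Definition is_alg_hom (A B : algType F) (f : A -> B) : Prop :=
  [/\ (forall (a : F) (x y : A), f (a *: x + y) = a *: f x + f y),
      (forall x y : A, f (x * y) = f x * f y) & f 1 = 1].

Definition is_alg_iso (A B : algType F) (f : A -> B) : Prop :=
  is_alg_hom f /\ bijective f.

Definition is_uea (g : lmodType F) (br : g -> g -> g) (U : algType F)
  (iota : g -> U) : Prop :=
  [/\ is_linear iota ,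
      (forall x y : g, iota (br x y) = iota x * iota y - iota y * iota x) &
  forall (B : algType F) (phi : g -> B),
    is_linear phi ->
    (forall x y : g, phi (br x y) = phi x * phi y - phi y * phi x) ->
    (exists psi : U -> B, is_alg_hom psi /\ forall x, psi (iota x) = phi x) /\
    (forall psi1 psi2 : U -> B, is_alg_hom psi1 -> is_alg_hom psi2 ->
       (forall x, psi1 (iota x) = phi x) -> (forall x, psi2 (iota x) = phi x) ->
       forall u, psi1 u = psi2 u)].

(* Relations of A^(+): [n0, n_k] = [n_l, n_m] for (k,l,m) a cyclic permutation
   of the three indices (0-based: (k, k+1, k+2) mod 3). *)
Definition Aplus_rel (B : algType F) (b0 : B) (b : 'I_3 -> B) : Prop :=
  forall k : 'I_3,
    b0 * b k - b k * b0 = b (ordS k) * b (ordS (ordS k)) - b (ordS (ordS k)) * b (ordS k).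

Definition is_Aplus (A : algType F) (n0 : A) (n : 'I_3 -> A) : Prop :=
  Aplus_rel n0 n /\
  forall (B : algType F) (b0 : B) (b : 'I_3 -> B), Aplus_rel b0 b ->
    (exists psi : A -> B, is_alg_hom psi /\ psi n0 = b0 /\ forall k, psi (n k) = b k) /\
    (forall psi1 psi2 : A -> B, is_alg_hom psi1 -> is_alg_hom psi2 ->
       psi1 n0 = b0 -> (forall k, psi1 (n k) = b k) ->
       psi2 n0 = b0 -> (forall k, psi2 (n k) = b k) ->
       forall x, psi1 x = psi2 x).

End Defs.

From HB Require Import structures.
From mathcomp Require Import all_boot all_algebra.
From mathcomp Require Import complex.
From mathcomp Require Import Rstruct.
Import GRing.Theory.
Local Open Scope ring_scope.
Set Implicit Arguments. Unset Strict Implicit.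

(* Both algebras are given by universal properties, so it suffices to build
   mutually inverse algebra maps.  In U the relations of A^(+) hold for the
   images of delta and of the generators g_k, because
   [delta, g_k] = D g_k = [g_(k+1), g_(k+2)]; this gives f : A -> U.
   Conversely, let psi : L -> A be the Lie map with g_k |-> n_k.  Both
   psi o D and ad n0 o psi are psi-derivations, i.e. x |-> (psi x, d x) is a
   Lie map into the dual numbers A[e]/(e^2), and they agree on the generators
   by the defining relations of A^(+); by freeness psi o D = ad n0 o psi.
   Hence a delta + x |-> a n0 + psi x is a Lie map from C delta |x L to A,
   which induces h : U -> A.  Finally f o h and h o f fix generators, so they
   are identities. *)


Section LinearPred.
Variables (F : fieldType) (U V : lmodType F) (f : U -> V).
Hypothesis lin_f : is_linear f.

Lemma is_linear0 : f 0 = 0.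
Proof.
apply: (addrI (f 0)); rewrite addr0.
by have := lin_f 1 0 0; rewrite !scale1r addr0 => /esym.
Qed.

Lemma is_linearD x y : f (x + y) = f x + f y.
Proof. by have := lin_f 1 x y; rewrite !scale1r. Qed.

Lemma is_linearZ a x : f (a *: x) = a *: f x.
Proof. by have := lin_f a x 0; rewrite !addr0 is_linear0 addr0. Qed.

Lemma is_linearB x y : f (x - y) = f x - f y.
Proof. by rewrite is_linearD -scaleN1r is_linearZ scaleN1r. Qed.

End LinearPred.

Section LieAlgebra.
Variables (F : fieldType) (V : lmodType F) (c : V -> V -> V).
Hypothesis lie_c : is_lie c.

Lemma is_lie_linearl z : is_linear (c^~ z).
Proof. by case: lie_c => h _ _ _ a x y; apply: h. Qed.

Lemma is_lie_linearr z : is_linear (c z).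
Proof. by case: lie_c => _ h _ _ a x y; apply: h. Qed.

Lemma lie_brDl x y z : c (x + y) z = c x z + c y z.
Proof. exact: is_linearD (is_lie_linearl z) x y. Qed.

Lemma lie_brDr z x y : c z (x + y) = c z x + c z y.
Proof. exact: is_linearD (is_lie_linearr z) x y. Qed.

Lemma lie_br0l z : c 0 z = 0.
Proof. exact: is_linear0 (is_lie_linearl z). Qed.

Lemma lie_brxx x : c x x = 0.
Proof. by case: lie_c. Qed.

Lemma lie_brC x y : c x y = - c y x.
Proof.
apply/eqP; rewrite -subr_eq0 opprK; apply/eqP.
have := lie_brxx (x + y); rewrite lie_brDl !lie_brDr !lie_brxx add0r addr0.
by rewrite addrC.
Qed.

Lemma lie_jacobi x y z : c x (c y z) + c y (c z x) + c z (c x y) = 0.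
Proof. by case: lie_c. Qed.

(* (x, x') stands for x + e x' in V (x) F[e]/(e^2). *)
Definition dual_br (u v : V * V) : V * V := (c u.1 v.1, c u.1 v.2 + c u.2 v.1).

Lemma dual_br_is_lie : is_lie dual_br.
Proof.
split.
- move=> a x y z; congr (_, _); first exact: is_lie_linearl.
  by rewrite /= !(is_lie_linearl _ a) addrACA -scalerDr.
- move=> a x y z; congr (_, _); first exact: is_lie_linearr.
  by rewrite /= !(is_lie_linearr _ a) addrACA -scalerDr.
- by move=> x; rewrite /dual_br lie_brxx (lie_brC x.2) addrN.
- move=> x y z; rewrite /dual_br /= !lie_brDr; congr (_, _).
    exact: lie_jacobi.
  (* three Jacobi identities, each with one argument taken from the e-part *)
  rewrite /= !addrA.
  by rewrite (@GRing.add V).[ACl ((1*5*9)*(2*6*7)*(3*4*8))] !lie_jacobi !addr0.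
Qed.

Lemma dual_br_hom (L : lmodType F) (br : L -> L -> L) (f d : L -> V) :
  is_lie_hom br c f -> is_linear d ->
  (forall x y, d (br x y) = c (d x) (f y) + c (f x) (d y)) ->
  is_lie_hom br dual_br (fun x => (f x, d x)).
Proof.
move=> [lin_f f_br] lin_d d_br; split=> [a x y | x y].
  by rewrite lin_f lin_d.
by rewrite f_br d_br addrC.
Qed.

Lemma free_lie_hom_derivation (L : lmodType F) (br : L -> L -> L) (g : 'I_3 -> L)
    (f : L -> V) (D : L -> L) (E : V -> V) :
  is_free_lie3 br g -> is_lie_hom br c f ->
  is_derivation br D -> is_derivation c E ->
  (forall k, f (D (g k)) = E (f (g k))) -> forall x, f (D x) = E (f x).
Proof.
move=> [_ free_L] f_hom [lin_D D_br] [lin_E E_br] DE_g x.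
have [_ hom_uniq] := free_L _ _ dual_br_is_lie (fun k => (f (g k), E (f (g k)))).
have fD_hom : is_lie_hom br dual_br (fun x => (f x, f (D x))).
  apply: dual_br_hom => // [a y z | y z]; first by rewrite lin_D f_hom.1.
  by rewrite D_br (is_linearD f_hom.1) !f_hom.2.
have Ef_hom : is_lie_hom br dual_br (fun x => (f x, E (f x))).
  apply: dual_br_hom => // [a y z | y z]; first by rewrite f_hom.1 lin_E.
  by rewrite f_hom.2 E_br.
have DE_gk k : (f (g k), f (D (g k))) = (f (g k), E (f (g k))) by rewrite DE_g.
by have /(congr1 snd) := hom_uniq _ _ fD_hom Ef_hom DE_gk (fun k => erefl) x.
Qed.

End LieAlgebra.

Section Commutator.
Variables (F : fieldType) (B : algType F).

Definition comm_br (x y : B) : B := x * y - y * x.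

Lemma comm_brC x y : comm_br x y = - comm_br y x.
Proof. by rewrite /comm_br opprB. Qed.

Lemma comm_br_leibniz b x y :
  comm_br b (comm_br x y) = comm_br (comm_br b x) y + comm_br x (comm_br b y).
Proof.
apply/eqP; rewrite -subr_eq0 /comm_br !mulrBr !mulrBl !mulrA !opprB ?opprD ?opprB !addrA.
by rewrite !opprK (@GRing.add B).[ACl ((1*5)*(2*12)*(3*7)*(4*10)*(6*9)*(8*11))] !subrr !addNr !addr0.
Qed.

Lemma comm_brxx x : comm_br x x = 0.
Proof. exact: subrr. Qed.

Lemma comm_brZl a x y : comm_br (a *: x) y = a *: comm_br x y.
Proof. by rewrite /comm_br -scalerAl -scalerAr scalerBr. Qed.

Lemma comm_brZr a x y : comm_br x (a *: y) = a *: comm_br x y.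
Proof. by rewrite /comm_br -scalerAl -scalerAr scalerBr. Qed.

Lemma comm_brNr x y : comm_br x (- y) = - comm_br x y.
Proof. by rewrite /comm_br mulrN mulNr opprK addrC opprB. Qed.

Lemma comm_br_is_lie : is_lie comm_br.
Proof.
split=> [a x y z | a x y z | x | x y z].
- by rewrite -comm_brZl /comm_br mulrDl mulrDr opprD addrACA.
- by rewrite -comm_brZr /comm_br mulrDl mulrDr opprD addrACA.
- exact: comm_brxx.
rewrite comm_br_leibniz (comm_brC z x) (comm_brC z (comm_br x y)) comm_brNr.
by rewrite addrK subrr.
Qed.

Lemma comm_br_derivation b : is_derivation comm_br (comm_br b).
Proof. by split; [exact: (is_lie_linearr comm_br_is_lie) | exact: comm_br_leibniz]. Qed.

End Commutator.

Lemma lie_hom_comp (F : fieldType) (U V W : lmodType F)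
    (brU : U -> U -> U) (brV : V -> V -> V) (brW : W -> W -> W)
    (f : U -> V) (h : V -> W) :
  is_lie_hom brU brV f -> is_lie_hom brV brW h -> is_lie_hom brU brW (h \o f).
Proof.
move=> [lin_f f_br] [lin_h h_br]; split=> [a x y | x y] /=.
  by rewrite lin_f lin_h.
by rewrite f_br h_br.
Qed.

Lemma alg_hom_comp (F : fieldType) (A B E : algType F) (f : A -> B) (h : B -> E) :
  is_alg_hom f -> is_alg_hom h -> is_alg_hom (h \o f).
Proof.
move=> [lin_f fM f1] [lin_h hM h1]; split=> [a x y | x y |] /=.
- by rewrite lin_f lin_h.
- by rewrite fM hM.
- by rewrite f1 h1.
Qed.

Lemma alg_hom_id (F : fieldType) (A : algType F) : is_alg_hom (@id A).
Proof. by []. Qed.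

Lemma alg_hom_linear (F : fieldType) (A B : algType F) (f : A -> B) :
  is_alg_hom f -> is_linear f.
Proof. by case. Qed.

Lemma alg_hom_comm_br (F : fieldType) (A B : algType F) (f : A -> B) :
  is_alg_hom f -> is_lie_hom (@comm_br _ A) (@comm_br _ B) f.
Proof.
move=> f_hom; split=> [|x y]; first exact: alg_hom_linear.
by case: f_hom => lin_f fM _; rewrite /comm_br (is_linearB lin_f) !fM.
Qed.

Section SemidirectProduct.
Variables (F : fieldType) (L : lmodType F) (br : L -> L -> L) (D : L -> L).

Lemma sdprod_br_inr x y : sdprod_br br D (0, x) (0, y) = (0, br x y).
Proof. by rewrite /sdprod_br /= !scale0r subrr add0r. Qed.

Lemma sdprod_br_delta y : is_lie br -> sdprod_br br D (1, 0) (0, y) = (0, D y).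
Proof.
by move=> lie_br; rewrite /sdprod_br /= scale1r scale0r subr0 lie_br0l // addr0.
Qed.

Lemma sdprod_comm_br_hom (B : algType F) (psi : L -> B) (b : B) :
  is_lie_hom br (@comm_br _ B) psi ->
  (forall x, psi (D x) = comm_br b (psi x)) ->
  is_lie_hom (sdprod_br br D) (@comm_br _ B) (fun u => u.1 *: b + psi u.2).
Proof.
move=> [lin_psi psi_br] psiD; split=> [a u v | u v] /=.
  by rewrite lin_psi scalerDl scalerDr addrACA scalerA.
have lie_comm := comm_br_is_lie B.
rewrite scale0r add0r (is_linearD lin_psi) (is_linearB lin_psi) !(is_linearZ lin_psi).
rewrite !psiD psi_br (lie_brDl lie_comm) !(lie_brDr lie_comm) !comm_brZl !comm_brZr.
by rewrite comm_brxx !scaler0 add0r (comm_brC (psi u.2) b) scalerN [RHS]addrA.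
Qed.

Lemma uea_inr_hom (U : algType F) (iota : (F^o * L)%type -> U) :
  is_linear iota -> (forall u v, iota (sdprod_br br D u v) = comm_br (iota u) (iota v)) ->
  is_lie_hom br (@comm_br _ U) (fun x => iota (0, x)).
Proof.
move=> lin_iota iota_br; split=> [a x y | x y].
  by rewrite -lin_iota; congr (iota (_, _)); rewrite /= scaler0 add0r.
by rewrite -sdprod_br_inr iota_br.
Qed.

Lemma sdprod_decomp (V : lmodType F) (phi : (F^o * L)%type -> V) a x :
  is_linear phi -> phi (a, x) = a *: phi (1, 0) + phi (0, x).
Proof.
move=> lin_phi; rewrite -lin_phi; congr (phi (_, _)).
  by rewrite /= addr0 [_ *: _]mulr1.
by rewrite /= scaler0 add0r.
Qed.

Lemma uea_sdprod_Aplus_rel (g : 'I_3 -> L) (U : algType F) (iota : (F^o * L)%type -> U) :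
  is_lie br -> (forall k, D (g k) = br (g (ordS k)) (g (ordS (ordS k)))) ->
  (forall u v, iota (sdprod_br br D u v) = comm_br (iota u) (iota v)) ->
  Aplus_rel (iota (1, 0)) (fun k => iota (0, g k)).
Proof.
move=> lie_br Dg iota_br k.
by have := iota_br (1, 0) (0, g k); rewrite sdprod_br_delta // Dg -sdprod_br_inr iota_br.
Qed.

End SemidirectProduct.

Theorem mainTheorem9
  :
  forall (A : algType C) (n0 : A) (n : 'I_3 -> A), is_Aplus n0 n ->
  forall (L : lmodType C) (br : L -> L -> L) (g : 'I_3 -> L), is_free_lie3 br g ->
  forall (D : L -> L), is_derivation br D ->
  (forall k : 'I_3, D (g k) = br (g (ordS k)) (g (ordS (ordS k)))) ->
  forall (U : algType C) (iota : (C^o * L)%type -> U), is_uea (sdprod_br br D) iota ->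
  exists f : A -> U,
    [/\ is_alg_iso f, f n0 = iota (1, 0) & forall k : 'I_3, f (n k) = iota (0, g k)].
Proof.
move=> A n0 n [A_rel A_univ] L br g free_L D D_der Dg U iota [lin_iota iota_br U_univ].
have [[f [f_hom [f_n0 f_n]]] _] :=
  A_univ U _ _ (uea_sdprod_Aplus_rel free_L.1 Dg iota_br).
have [[psi [psi_hom psi_g]] _] := free_L.2 A _ (comm_br_is_lie A) n.
have psiD : forall x, psi (D x) = comm_br n0 (psi x).
  apply: (free_lie_hom_derivation (comm_br_is_lie A) free_L psi_hom D_der
    (comm_br_derivation n0)) => k.
  by rewrite Dg psi_hom.2 !psi_g; symmetry; apply: A_rel.
have [phi_lin phi_br] := sdprod_comm_br_hom psi_hom psiD.
have [[h [h_hom h_iota]] _] := U_univ A _ phi_lin phi_br.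
have f_psi x : f (psi x) = iota (0, x).
  have [_ hom_uniq] := free_L.2 U _ (comm_br_is_lie U) (fun k => iota (0, g k)).
  apply: (hom_uniq _ _ (lie_hom_comp psi_hom (alg_hom_comm_br f_hom))
    (uea_inr_hom lin_iota iota_br)) => k //=.
  by rewrite psi_g f_n.
have fK : cancel f h.
  have [_ hom_uniq] := A_univ A n0 n A_rel.
  apply: (hom_uniq _ _ (alg_hom_comp f_hom h_hom) (alg_hom_id A)) => // [|k] /=.
    by rewrite f_n0 h_iota /= scale1r (is_linear0 psi_hom.1) addr0.
  by rewrite f_n h_iota /= scale0r add0r psi_g.
have hK : cancel h f.
  have [_ hom_uniq] := U_univ U iota lin_iota iota_br.
  apply: (hom_uniq _ _ (alg_hom_comp h_hom f_hom) (alg_hom_id U)) => // -[a x] /=.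
  by rewrite h_iota /= (alg_hom_linear f_hom) f_n0 f_psi (sdprod_decomp a x lin_iota).
by exists f; split=> //; split=> //; exists h.
Qed.
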